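(* Let $k\subset K$ be a finite field extension such that Waring's problem holds in $k$. Then $k^+\subseteq\overline{N}_{K/k}$.
   Context: $N_{K/k}:K\to k$ is the field norm. $\overline{N}_{K/k}\subseteq k$ denotes the additive closure of the image of the norm, i.e. the set of all finite sums $\sum_i N_{K/k}(a_i)$ with $a_i\in K$ (including $0$). An element $a\in k$ is totally positive if $a>0$ in every ordering of $k$ (if $k$ has no orderings, every element is totally positive); $k^+$ denotes the set of totally positive elements of $k$ together with $0$. Waring's problem holds in $k$ if for every exponent $d\ge1$ there is a finite bound $g(k,d)$ such that every totally positive element of $k$ is a sum of at most $g(k,d)$ $d$-th powers of elements of $k$. *)

From HB Require Import structures.
From mathcomp Require Import all_boot all_order all_algebra all_field.
Set Implicit Arguments. Unset Strict Implicit. Unset Printing Implicit Defensive.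
Import GRing.Theory.
Local Open Scope ring_scope.

(* An ordering of a field k, given by its positive cone P = {x | x >= 0}:
   closed under + and *, P u -P = k, P n -P = {0}. *)
Definition is_ordering (k : fieldType) (P : k -> Prop) : Prop :=
  [/\ (forall x y, P x -> P y -> P (x + y)),
      (forall x y, P x -> P y -> P (x * y)),
      (forall x, P x \/ P (- x)) &
      (forall x, P x -> P (- x) -> x = 0)].

Definition pos_in (k : fieldType) (P : k -> Prop) (a : k) : Prop := P a /\ a <> 0.

(* a is totally positive: positive in every ordering of k
   (vacuously true if k has no orderings). *)
Definition totally_positive (k : fieldType) (a : k) : Prop :=
  forall P : k -> Prop, is_ordering P -> pos_in P a.

Definition tot_pos0 (k : fieldType) (a : k) : Prop :=
  totally_positive a \/ a = 0.

Definition waring_holds (k : fieldType) : Prop :=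
  forall d : nat, (1 <= d)%N -> exists g : nat, forall a : k, totally_positive a ->
    exists s : seq k, (size s <= g)%N /\ a = \sum_(x <- s) x ^+ d.

Definition field_norm (k : fieldType) (K : fieldExtType k) (a : K) : k :=
  \det (passmx.mxof (vbasis {:K}) (vbasis {:K}) (amull a)).

(* Additive closure of the image of the norm: finite sums of norms (incl. 0). *)
Definition norm_sums (k : fieldType) (K : fieldExtType k) (a : k) : Prop :=
  exists s : seq K, a = \sum_(x <- s) field_norm x.

From HB Require Import structures.
From mathcomp Require Import all_boot all_order all_algebra all_field.
Import GRing.Theory.
Local Open Scope ring_scope.

(* Let n = [K : k].  The norm of an element of the base field is
   a pure power: N_{K/k}(c) = c ^+ n, because multiplication by c%:A is the
   scalar map c *: \1, whose matrix in any basis is c%:M, of determinant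
   c ^+ n.  Hence every sum of n-th powers in k is a sum of norms.  Waring's
   problem in k, applied with exponent n >= 1, writes every totally positive
   element as such a sum, and 0 is the empty sum of norms; so k^+ is contained
   in the additive closure of the norm. *)

Lemma amull_scalar (k : fieldType) (A : falgType k) (c : k) :
  amull (c%:A : A) = c *: \1%VF.
Proof. by rewrite -(amull1 A) -linearZ. Qed.

(* In the canonical basis of V, the matrix of c *: \1 is the scalar matrix c%:M;
   the zero map is split off because mxof is only known to be linear as a
   whole (mxof_linear), not through the generic linearZ rewrite. *)
Lemma mxof_scalar (k : fieldType) (V : vectType k) (c : k) :
  passmx.mxof (vbasis {:V}) (vbasis {:V}) (c *: \1%VF) = c%:M.
Proof.
have e_basis := vbasisP {:V}.
have mxof0 : passmx.mxof (vbasis {:V}) (vbasis {:V}) 0 = 0.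
  by apply/eqP; rewrite (passmx.mxof_eq0 e_basis e_basis).
rewrite -[c *: _]addr0 passmx.mxof_linear mxof0 addr0.
by rewrite passmx.mxof1 ?(basis_free e_basis) // scalemx1.
Qed.

Lemma field_normC (k : fieldType) (K : fieldExtType k) (c : k) :
  field_norm (c%:A : K) = c ^+ \dim {:K}.
Proof. by rewrite /field_norm amull_scalar mxof_scalar det_scalar. Qed.

Lemma norm_sums_powers (k : fieldType) (K : fieldExtType k) (s : seq k) :
  norm_sums K (\sum_(x <- s) x ^+ \dim {:K}).
Proof.
exists [seq (x%:A : K) | x <- s]; rewrite big_map.
by apply: eq_bigr => x _; rewrite field_normC.
Qed.

Theorem mainTheorem6 (k : fieldType) (K : fieldExtType k) :
  waring_holds k -> forall a : k, tot_pos0 a -> norm_sums K a.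
Proof.
move=> waring a [a_totpos | ->]; last by exists [::]; rewrite big_nil.
have dimK_gt0 : (1 <= \dim {:K})%N := adim_gt0 (fullv : {aspace K}).
have [g sum_powers] := waring _ dimK_gt0.
have [s [_ ->]] := sum_powers a a_totpos.
exact: norm_sums_powers.
Qed.
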